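(* Let $\nabla$ be a connection on an anchored vector bundle $(A,a_A)$ over $M$, let $[x,y]^\nabla=\nabla_xy-\nabla_yx$, and let $R^\nabla(x,y)z=\nabla_x\nabla_yz-\nabla_y\nabla_xz-\nabla_{[x,y]^\nabla}z$. The following are equivalent: (1) for all $x,y\in\Gamma(A)$ the map $z\mapsto R^\nabla(x,y)z$ is $C^\infty(M)$-linear; (2) $(A,[\cdot,\cdot]^\nabla,a_A)$ is a dull algebroid.
   Context: A connection on the anchored bundle $(A,a_A)$ (with $a_A:A\to TM$ a bundle map) is an $\mathbb{R}$-bilinear operator $\nabla:\Gamma(A)\times\Gamma(A)\to\Gamma(A)$ with $\nabla_{fx}y=f\nabla_xy$ and $\nabla_x(fy)=a_A(x)(f)\,y+f\nabla_xy$. A dull algebroid is a triple $(A,[\cdot,\cdot],a_A)$ where $[\cdot,\cdot]$ is a skew-symmetric $\mathbb{R}$-bilinear bracket on $\Gamma(A)$ with $[x,fy]=f[x,y]+a_A(x)(f)y$ and additionally $a_A([x,y])=[a_A(x),a_A(y)]$ for all $x,y\in\Gamma(A)$. *)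

(* Algebraic (Serre–Swan) rendering of smooth objects:
   K         : the scalar field (the reals, kept abstract),
   R         : the commutative K-algebra C^oo(M),
   V         : the R-module Gamma(A), finitely generated projective,
   vector fields on M : K-linear derivations of R (X(M) = Der(C^oo(M))),
   anchor    : an R-linear map Gamma(A) -> Der(R). *)
From HB Require Import structures.
From mathcomp Require Import all_boot all_order all_algebra.
Set Implicit Arguments. Unset Strict Implicit. Unset Printing Implicit Defensive.
Import Order.TTheory GRing.Theory Num.Theory.
Local Open Scope ring_scope.

Section Defs.
Variables (K : fieldType) (R : comAlgType K) (V : lmodType R).

Definition is_vector_field (D : R -> R) : Prop :=
  [/\ forall f g, D (f + g) = D f + D g,
      forall (c : K) f, D (c *: f) = c *: D f &
      forall f g, D (f * g) = f * D g + D f * g].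

Definition fg_projective : Prop :=
  exists (n : nat) (i : V -> 'rV[R]_n) (p : 'rV[R]_n -> V),
    [/\ forall (f : R) x y, i (f *: x + y) = f *: i x + i y,
        forall (f : R) u v, p (f *: u + v) = f *: p u + p v &
        forall x, p (i x) = x].

(* the anchor a_A : A -> TM, as a C^oo(M)-linear map Gamma(A) -> X(M);
   a x f is the function a_A(x)(f) *)
Definition is_anchor (a : V -> R -> R) : Prop :=
  [/\ forall x, is_vector_field (a x),
      forall x y f, a (x + y) f = a x f + a y f &
      forall (g : R) x f, a (g *: x) f = g * a x f].

Definition is_connection (a : V -> R -> R) (nabla : V -> V -> V) : Prop :=
  [/\ forall x x' y, nabla (x + x') y = nabla x y + nabla x' y,
      forall x y y', nabla x (y + y') = nabla x y + nabla x y',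
      forall (c : K) x y, nabla x ((c%:A : R) *: y) = (c%:A : R) *: nabla x y,
      forall (f : R) x y, nabla (f *: x) y = f *: nabla x y &
      forall (f : R) x y, nabla x (f *: y) = a x f *: y + f *: nabla x y].

Definition conn_bracket (nabla : V -> V -> V) (x y : V) : V :=
  nabla x y - nabla y x.

Definition curvature (nabla : V -> V -> V) (x y z : V) : V :=
  nabla x (nabla y z) - nabla y (nabla x z) - nabla (conn_bracket nabla x y) z.

Definition dull_algebroid (a : V -> R -> R) (br : V -> V -> V) : Prop :=
  [/\
      [/\ forall x x' y, br (x + x') y = br x y + br x' y,
         forall x y y', br x (y + y') = br x y + br x y',
         forall (c : K) x y, br ((c%:A : R) *: x) y = (c%:A : R) *: br x y &
         forall (c : K) x y, br x ((c%:A : R) *: y) = (c%:A : R) *: br x y],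
      forall x y, br x y = - br y x,
      forall (f : R) x y, br x (f *: y) = f *: br x y + a x f *: y &
      forall x y f, a (br x y) f = a x (a y f) - a y (a x f)].

Definition curvature_tensorial (nabla : V -> V -> V) : Prop :=
  forall x y, forall (f : R) z z',
    curvature nabla x y (f *: z + z') =
    f *: curvature nabla x y z + curvature nabla x y z'.

End Defs.

(* The Leibniz rule of the connection gives
     R(x,y)(f z) = f R(x,y) z + d(x,y,f) z,  d(x,y,f) = a_x a_y f - a_y a_x f - a_[x,y] f,
   so tensoriality of the curvature says that every d(x,y,f) annihilates Gamma(A),
   while a dull algebroid is exactly the requirement d = 0 (the other axioms hold for
   the bracket of any connection).  If Q is an idempotent matrix presenting the
   projective module Gamma(A), then e = det(1 - Q) annihilates Gamma(A) and acts as a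
   unit on its annihilator.  Since the anchor is C^oo(M)-linear, e d = 0, whence
   d = d e = 0. *)
From HB Require Import structures.
From mathcomp Require Import all_boot all_order all_algebra.
Set Implicit Arguments. Unset Strict Implicit. Unset Printing Implicit Defensive.
Import GRing.Theory.
Local Open Scope ring_scope.

Definition annihilates (R : pzRingType) (V : lmodType R) (r : R) : Prop :=
  forall v : V, r *: v = 0.

Definition anchor_defect (R : zmodType) (V : Type) (a : V -> R -> R)
    (br : V -> V -> V) (x y : V) (f : R) : R :=
  a x (a y f) - a y (a x f) - a (br x y) f.

Lemma mulr_det_congr (R : comPzRingType) (n : nat) (x : R) (A B : 'M[R]_n) :
  (forall i j, x * A i j = x * B i j) -> x * \det A = x * \det B.
Proof.
move=> xAB; rewrite /determinant !big_distrr; apply: eq_bigr => s _ /=.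
rewrite mulrCA [RHS]mulrCA; congr (_ * _).
apply: (big_ind2 (fun u v => x * u = x * v)) => // u1 v1 u2 v2 xuv1 xuv2.
by rewrite mulrA xuv1 -mulrA mulrCA xuv2 mulrCA mulrA.
Qed.

Section ProjectiveModule.
Variables (R : comNzRingType) (V : lmodType R) (n : nat).
Variables (i : V -> 'rV[R]_n) (p : 'rV[R]_n -> V).
Hypotheses (i_linear : forall (f : R) x y, i (f *: x + y) = f *: i x + i y)
  (p_linear : forall (f : R) u v, p (f *: u + v) = f *: p u + p v)
  (iK : cancel i p).

HB.instance Definition _ := GRing.isLinear.Build R V 'rV[R]_n *:%R i i_linear.
HB.instance Definition _ := GRing.isLinear.Build R 'rV[R]_n V *:%R p p_linear.

Definition proj_mx : 'M[R]_n := \matrix_(l, j) i (p 'e_l) 0 j.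

Lemma mulmx_proj (u : 'rV[R]_n) : u *m proj_mx = i (p u).
Proof.
rewrite {2}(row_sum_delta u) !linear_sum; apply/rowP => j.
rewrite !mxE summxE; apply: eq_bigr => l _.
by rewrite !linearZ !mxE.
Qed.

Lemma proj_mx_idem : proj_mx *m proj_mx = proj_mx.
Proof.
apply/row_matrixP => l; rewrite row_mul.
have -> : row l proj_mx = i (p 'e_l) by apply/rowP => j; rewrite !mxE.
by rewrite mulmx_proj iK.
Qed.

Lemma det_proj_annihilates : annihilates V (\det (1%:M - proj_mx)).
Proof.
move=> v; rewrite -[v]iK -linearZ /=.
have -> : i v = i v *m proj_mx by rewrite mulmx_proj iK.
rewrite scalemxAr -mul_scalar_mx -mul_adj_mx -mulmxA mulmxBl mul1mx.
by rewrite proj_mx_idem subrr !mulmx0 linear0.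
Qed.

Lemma annihilator_mul_det (x : R) :
  annihilates V x -> x * \det (1%:M - proj_mx) = x.
Proof.
move=> xV; rewrite -[RHS]mulr1 -[1 in RHS](det1 R n).
apply: mulr_det_congr => l j.
have := congr1 (fun v => i v 0 j) (xV (p 'e_l)).
by rewrite /= linearZ linear0 !mxE => xQ; rewrite mulrBr xQ subr0.
Qed.

End ProjectiveModule.

Lemma fg_projective_annihilator_unit (K : fieldType) (R : comAlgType K)
    (V : lmodType R) :
  fg_projective V ->
  exists2 e : R, annihilates V e & forall x, annihilates V x -> x * e = x.
Proof.
case=> n [i [p [i_linear p_linear iK]]].
exists (\det (1%:M - proj_mx i p)).
  exact: det_proj_annihilates.
exact: annihilator_mul_det.
Qed.

Lemma annihilator_eq0 (K : fieldType) (R : comAlgType K) (V : lmodType R)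
    (r : R) :
  fg_projective V -> annihilates V r ->
  (forall e, annihilates V e -> e * r = 0) -> r = 0.
Proof.
by case/fg_projective_annihilator_unit=> e eV eU rV rK; rewrite -(eU r rV) mulrC rK.
Qed.

Lemma vector_field_scalar (K : fieldType) (R : comAlgType K) (D : R -> R) :
  is_vector_field D -> forall c : K, D c%:A = 0.
Proof.
case=> _ DZ DM c.
have D1 : D 1 = 0.
  by have := DM 1 1; rewrite !mul1r mulr1 -{1}[D 1]addr0 => /addrI/esym.
by rewrite DZ D1 scaler0.
Qed.

Section Anchor.
Variables (K : fieldType) (R : comAlgType K) (V : lmodType R).
Variable a : V -> R -> R.
Hypothesis anchor : is_anchor a.

Lemma annihilator_mul_anchor (e : R) x f : annihilates V e -> e * a x f = 0.
Proof.
have [_ _ aZ] := anchor.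
by move=> eV; rewrite -aZ eV -(scale0r (0 : V)) aZ mul0r.
Qed.

Lemma annihilator_mul_anchor_defect (br : V -> V -> V) (e : R) x y f :
  annihilates V e -> e * anchor_defect a br x y f = 0.
Proof.
by move=> eV; rewrite /anchor_defect !mulrBr !annihilator_mul_anchor ?subrr.
Qed.

Lemma dull_algebroid_conn_bracketE (nabla : V -> V -> V) :
  is_connection a nabla ->
  dull_algebroid a (conn_bracket nabla) <->
  forall x y f, anchor_defect a (conn_bracket nabla) x y f = 0.
Proof.
case=> nablaDl nablaDr nablaZr_scalar nablaZl nablaZr; have [a_vf _ _] := anchor.
rewrite /conn_bracket; split=> [[_ _ _ a_morph] x y f|defect0].
  by rewrite /anchor_defect a_morph subrr.
split.
- split=> [x x' y|x y y'|c x y|c x y].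
  + by rewrite nablaDl nablaDr opprD addrACA.
  + by rewrite nablaDl nablaDr opprD addrACA.
  + by rewrite nablaZl nablaZr (vector_field_scalar (a_vf y)) scale0r add0r scalerBr.
  + by rewrite nablaZr_scalar nablaZl scalerBr.
- by move=> x y; rewrite opprB.
- by move=> f x y; rewrite nablaZr nablaZl scalerBr [a x f *: y + _]addrC addrAC.
- by move=> x y f; apply/esym/subr0_eq; exact: defect0.
Qed.

End Anchor.

Section Connection.
Variables (K : fieldType) (R : comAlgType K) (V : lmodType R).
Variables (a : V -> R -> R) (nabla : V -> V -> V).
Hypothesis conn : is_connection a nabla.

Lemma curvatureD x y z z' :
  curvature nabla x y (z + z') = curvature nabla x y z + curvature nabla x y z'.
Proof.
have [_ nablaD _ _ _] := conn.
by rewrite /curvature !nablaD !opprD !addrA [RHS](ACl (1*4*2*5*3*6))/=.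
Qed.

Lemma curvatureZ x y f z :
  curvature nabla x y (f *: z) =
  f *: curvature nabla x y z + anchor_defect a (conn_bracket nabla) x y f *: z.
Proof.
have [_ nablaD _ _ nablaZ] := conn.
rewrite /curvature /anchor_defect !nablaZ !nablaD !nablaZ !scalerBr !scalerBl.
(* the mixed terms a_y f nabla_x z and a_x f nabla_y z cancel *)
by rewrite !opprD !addrA [LHS](ACl ((2*7)*(3*6)*(4*8*10*1*5*9)))/= !subrr !add0r.
Qed.

Lemma curvature_tensorialE :
  curvature_tensorial nabla <->
  forall x y f, annihilates V (anchor_defect a (conn_bracket nabla) x y f).
Proof.
split=> tensorial x y f => [z|z z'].
  have := tensorial x y f z 0; rewrite curvatureD curvatureZ => /addIr.
  by rewrite -[X in _ = X]addr0 => /addrI.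
by rewrite curvatureD curvatureZ tensorial addr0.
Qed.

End Connection.

Theorem proposition2p5 (K : fieldType) (R : comAlgType K) (V : lmodType R)
  (a : V -> R -> R) (nabla : V -> V -> V) :
  fg_projective V -> is_anchor a -> is_connection a nabla ->
  (curvature_tensorial nabla <-> dull_algebroid a (conn_bracket nabla)).
Proof.
move=> projV anchor conn; have dullE := dull_algebroid_conn_bracketE anchor conn.
split=> [/(curvature_tensorialE conn) defectV|/dullE defect0].
  apply/dullE => x y f.
  apply: (annihilator_eq0 projV (defectV x y f)) => e eV.
  exact: annihilator_mul_anchor_defect.
by apply/(curvature_tensorialE conn) => x y f z; rewrite defect0 scale0r.
Qed.
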